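(* Let $\varphi$ be a quasi-concave function on $\Omega$ (where $\Omega=(0,1)$ or $\Omega=(0,\infty)$) such that $\lim_{t\to0^+}t/\varphi(t)=0$. Then the Marcinkiewicz space $M_\varphi$ on $\Omega$ contains a lattice isometric copy of $\ell_\infty$.
   Context: A function $\varphi$ on $\Omega$ is quasi-concave if $\varphi(0)=0$, $\varphi$ is positive and non-decreasing on $\Omega$, and $t\mapsto\varphi(t)/t$ is non-increasing. The Marcinkiewicz space $M_\varphi$ is the space of measurable $f$ on $\Omega$ with $\|f\|_{M_\varphi}=\sup_{t\in\Omega}\frac{\varphi(t)}{t}\int_0^tf^*(s)\,ds<\infty$, where $f^*$ is the non-increasing rearrangement of $|f|$ with respect to Lebesgue measure. ''Contains a lattice isometric copy of $\ell_\infty$'' means there is a linear isometric embedding $T:\ell_\infty\to M_\varphi$ which is a lattice homomorphism. *)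

From HB Require Import structures.
From mathcomp Require Import all_boot all_order all_algebra.
From mathcomp Require Import all_classical all_reals all_analysis.
Set Implicit Arguments. Unset Strict Implicit. Unset Printing Implicit Defensive.
Import Order.TTheory GRing.Theory Num.Theory.
Import numFieldNormedType.Exports.
Local Open Scope classical_set_scope.
Local Open Scope ring_scope.

Section Defs.
Variable R : realType.

Definition quasi_concave (Omega : set R) (phi : R -> R) : Prop :=
  [/\ phi 0 = 0,
      (forall t, Omega t -> 0 < phi t),
      (forall s t, Omega s -> Omega t -> s <= t -> phi s <= phi t) &
      (forall s t, Omega s -> Omega t -> s <= t -> phi t / t <= phi s / s)].

Definition distfun (Omega : set R) (f : R -> R) (l : R) : \bar R :=
  (@lebesgue_measure R) (Omega `&` [set t | l < `|f t|]).

Definition rearr (Omega : set R) (f : R -> R) (s : R) : \bar R :=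
  ereal_inf [set l%:E | l in [set l : R | 0 <= l /\ (distfun Omega f l <= s%:E)%E]].

Definition Mnorm (Omega : set R) (phi : R -> R) (f : R -> R) : \bar R :=
  ereal_sup [set ((phi t / t)%:E *
     \int[@lebesgue_measure R]_(s in [set s : R | (0 < s < t)%R]) rearr Omega f s)%E
     | t in Omega].

Definition in_Marcinkiewicz (Omega : set R) (phi : R -> R) (f : R -> R) : Prop :=
  measurable_fun Omega f /\ (Mnorm Omega phi f < +oo)%E.

Definition bounded_seq (x : nat -> R) : Prop := exists M : R, forall n, `|x n| <= M.
Definition linf_norm (x : nat -> R) : \bar R := ereal_sup (range (fun n => (`|x n|)%:E)).

Definition ae_eq_on (Omega : set R) (f g : R -> R) : Prop :=
  {ae @lebesgue_measure R, forall t, Omega t -> f t = g t}.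

Definition lattice_isometric_embedding (Omega : set R) (phi : R -> R)
    (T : (nat -> R) -> (R -> R)) : Prop :=
  [/\ (forall x, bounded_seq x -> in_Marcinkiewicz Omega phi (T x)),
      (forall x y, bounded_seq x -> bounded_seq y ->
         ae_eq_on Omega (T (x \+ y)) (T x \+ T y)),
      (forall (a : R) x, bounded_seq x ->
         ae_eq_on Omega (T (fun n => a * x n)) (fun t => a * T x t)),
      (forall x y, bounded_seq x -> bounded_seq y ->
         ae_eq_on Omega (T (fun n => Num.max (x n) (y n)))
                        (fun t => Num.max (T x t) (T y t))) &
      (forall x, bounded_seq x -> Mnorm Omega phi (T x) = linf_norm x)].

End Defs.

(* Put psi t = t / phi t; it is nondecreasing and tends to 0 at 0.  Choose
   t_0 = 1/2 > t_1 > ... decreasing to 0, with t_(k+1) <= t_k / (k+2), such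
   that with c_k = (1 - 1/(k+2)) / phi t_k the chord bound
   c_k (u - t_(k+1)) <= psi u - psi t_(k+1) holds on [t_(k+1), t_k]: take for
   t_(k+1) a minimiser of psi u - c_k u on [s, t_k] with psi s tiny.  Give the
   piece [t_(k+1), t_k) the coordinate n = log2 (k+1), so that each coordinate
   owns infinitely many pieces, and let T x = x_n c_k on that piece.
   |T x| is dominated by the nonincreasing function ||x|| sum_k c_k 1_k, whose
   integral over (0, t) telescopes to at most ||x|| psi t; hence
   ||T x|| <= ||x||.  Testing the norm at t = t_k - t_(k+1), where |T x| equals
   |x_n| c_k on a set of that measure, gives ||T x|| >= |x_n| (1 - 1/(k+2))^2
   by quasi-concavity, and k can be taken arbitrarily large. *)

From HB Require Import structures.
From mathcomp Require Import all_boot all_order all_algebra.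
From mathcomp Require Import all_classical all_reals all_analysis.
From mathcomp Require Import ring lra zify.
From mathcomp Require Import measurable_realfun.
Import Order.TTheory GRing.Theory Num.Theory.
Import numFieldNormedType.Exports.
Local Open Scope classical_set_scope.
Local Open Scope ring_scope.
Set Implicit Arguments. Unset Strict Implicit. Unset Printing Implicit Defensive.

Section Preliminaries.
Variable R : realType.
Local Notation mu := (@lebesgue_measure R).

Lemma itv0E (t : R) : [set s : R | 0 < s < t] = `]0, t[%classic.
Proof. by apply/seteqP; split => x /=; rewrite in_itv. Qed.

Lemma measurable_itv0 (t : R) : measurable [set s : R | 0 < s < t].
Proof. by rewrite itv0E; exact: measurable_itv. Qed.

Lemma lebesgue_measure_itv0 (t : R) : 0 < t -> mu [set s : R | 0 < s < t] = t%:E.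
Proof. by move=> t0; rewrite itv0E lebesgue_measure_itv /= lte_fin t0 /= sube0. Qed.

Lemma measurable_const_set (P : Prop) : measurable [set _ : R | P].
Proof.
have [p|np] := pselect P.
  by rewrite (_ : [set _ | P] = setT) //; apply/seteqP; split.
by rewrite (_ : [set _ | P] = set0) //; apply/seteqP; split.
Qed.

Lemma measurable_norm_gt (D : set R) (f : R -> R) (l : R) :
  measurable D -> measurable_fun D f -> measurable (D `&` [set u | l < `|f u|]).
Proof.
move=> mD mf.
have := measurableT_comp (@normr_measurable R setT) mf mD (measurable_itv `]l, +oo[).
rewrite (_ : _ @^-1` _ = [set u | l < `|f u|]) //.
by apply/seteqP; split => u /=; rewrite in_itv /= andbT.
Qed.

(* The rearrangement is not known to be measurable, so integrals are compared
   through the supremum over the simple functions below the integrand. *)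
Lemma ge0_le_integral_nomeas (D : set R) (f1 f2 : R -> \bar R) :
  (forall x, D x -> (0 <= f1 x)%E) -> (forall x, D x -> (f1 x <= f2 x)%E) ->
  (\int[mu]_(x in D) f1 x <= \int[mu]_(x in D) f2 x)%E.
Proof.
move=> f10 f12.
have f20 x : D x -> (0 <= f2 x)%E by move=> Dx; exact: le_trans (f10 _ Dx) (f12 _ Dx).
rewrite !ge0_integralE //; apply: ereal_sup_le => _ [h hf <-]; exists h => //.
move=> x; apply: le_trans (hf x) _; rewrite /patch; case: ifPn => // /set_mem.
exact: f12.
Qed.

Lemma linf_norm_fin_num (x : nat -> R) : bounded_seq x -> linf_norm x \is a fin_num.
Proof.
case=> M xM; rewrite fin_numElt; apply/andP; split.
  by apply: lt_le_trans (ltNyr `|x 0%N|) _; apply: ereal_sup_ubound; exists 0%N.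
by apply: le_lt_trans (ltry M); apply: ge_ereal_sup => _ [n _ <-]; rewrite lee_fin.
Qed.

Lemma lee_frequently_sqr (a : R) (E : \bar R) : 0 <= a ->
  (forall N, exists2 k, (N <= k)%N & ((a * (1 - k.+2%:R^-1) ^+ 2)%:E <= E)%E) ->
  (a%:E <= E)%E.
Proof.
move=> a0 aE; case: E aE => [r| |] aE; last 2 first.
- by rewrite leey.
- by have [k _] := aE 0%N; rewrite leeNy_eq.
rewrite lee_fin leNgt; apply/negP => ra.
have ar : 0 < a - r by rewrite subr_gt0.
set N := Num.truncn (2 * a / (a - r)).
have [k Nk] := aE N; rewrite lee_fin.
set D : R := k.+2%:R; set d := D^-1.
have D0 : 0 < D by rewrite /D ltr0n.
have d0 : 0 < d by rewrite invr_gt0.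
have Dd : D * d = 1 by rewrite mulfV // gt_eqF.
have aD : 2 * a < D * (a - r).
  rewrite -ltr_pdivrMr //; apply: lt_le_trans (truncnS_gt _) _.
  by rewrite /D ler_nat -/N; lia.
have : 2 * a * d < D * (a - r) * d by rewrite ltr_pM2r.
rewrite [D * _ * _]mulrAC Dd mul1r; nra.
Qed.

End Preliminaries.

Lemma logn2_frequently n N : exists2 k, (N <= k)%N & logn 2 k.+1 = n.
Proof.
exists (2 ^ n * N.*2.+1).-1.
  have : (N.*2.+1 <= 2 ^ n * N.*2.+1)%N by rewrite leq_pmull ?expn_gt0.
  by have := expn_gt0 2 n; lia.
rewrite prednK ?muln_gt0 ?expn_gt0 // lognM ?expn_gt0 // pfactorK //.
by rewrite logn_coprime ?addn0 // coprime2n /= odd_double.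
Qed.

Section Rearrangement.
Variables (R : realType) (Omega : set R).
Hypothesis measurable_Omega : measurable Omega.
Hypothesis Omega_gt0 : Omega `<=` [set u | 0 < u].
Local Notation mu := (@lebesgue_measure R).

Lemma rearr_ge0 f s : (0 <= rearr Omega f s)%E.
Proof. by apply: le_ereal_inf_tmp => _ [l [l0 _] <-]; rewrite lee_fin. Qed.

Lemma rearr_le_nonincreasing (f g : R -> R) (s : R) : measurable_fun Omega f ->
  (forall u v, 0 < u -> u <= v -> g v <= g u) ->
  (forall u, Omega u -> `|f u| <= g u) -> 0 < s -> 0 <= g s ->
  (rearr Omega f s <= (g s)%:E)%E.
Proof.
move=> mf gdec fg s0 gs0; apply: ereal_inf_lbound; exists (g s) => //; split => //.
rewrite /distfun -(lebesgue_measure_itv0 s0).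
apply: le_measure; rewrite ?inE; [exact: measurable_norm_gt|exact: measurable_itv0|].
move=> u [Ou /= fu]; rewrite (Omega_gt0 Ou) /= ltNge; apply/negP => su.
by have := lt_le_trans fu (le_trans (fg _ Ou) (gdec _ _ s0 su)); rewrite ltxx.
Qed.

Lemma rearr_ge_on (f : R -> R) (B : set R) (c s : R) : measurable_fun Omega f ->
  measurable B -> B `<=` Omega -> (forall u, B u -> c <= `|f u|) ->
  (s%:E < mu B)%E -> (c%:E <= rearr Omega f s)%E.
Proof.
move=> mf mB BOm Bc sB.
apply: le_ereal_inf_tmp => _ [l [_ dl] <-]; rewrite lee_fin leNgt; apply/negP => lc.
have : (mu B <= distfun Omega f l)%E.
  apply: le_measure; rewrite ?inE //; first exact: measurable_norm_gt.
  by move=> u Bu; split; [exact: BOm | exact: lt_le_trans lc (Bc _ Bu)].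
by move=> /le_trans/(_ dl)/(lt_le_trans sB); rewrite ltxx.
Qed.

Lemma Mnorm_le_nonincreasing (phi f g : R -> R) (b : \bar R) :
  measurable_fun Omega f -> (forall u, Omega u -> 0 <= phi u) ->
  (forall u v, 0 < u -> u <= v -> g v <= g u) -> (forall u, 0 < u -> 0 <= g u) ->
  (forall u, Omega u -> `|f u| <= g u) ->
  (forall t, Omega t ->
    ((phi t / t)%:E * \int[mu]_(s in [set s : R | (0 < s < t)%R]) (g s)%:E <= b)%E) ->
  (Mnorm Omega phi f <= b)%E.
Proof.
move=> mf phi0 gdec g0 fg gb; apply: ge_ereal_sup => _ [t Ot <-].
apply: le_trans (gb _ Ot); apply: lee_wpmul2l.
  by rewrite lee_fin divr_ge0 ?phi0 // ltW // Omega_gt0.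
apply: ge0_le_integral_nomeas => s /andP[s0 _]; first exact: rearr_ge0.
by apply: rearr_le_nonincreasing => //; exact: g0.
Qed.

Lemma Mnorm_ge_on (phi f : R -> R) (B : set R) (c m : R) :
  measurable_fun Omega f -> measurable B -> B `<=` Omega -> mu B = m%:E ->
  Omega m -> 0 <= c -> 0 <= phi m -> (forall u, B u -> c <= `|f u|) ->
  ((c * phi m)%:E <= Mnorm Omega phi f)%E.
Proof.
move=> mf mB BOm Bm Om_m c0 phim0 Bc; have m0 := Omega_gt0 Om_m.
apply: le_trans (ereal_sup_ubound _); last by exists m.
have int_ge : ((c * m)%:E <=
    \int[mu]_(s in [set s : R | (0 < s < m)%R]) rearr Omega f s)%E.
  rewrite EFinM -(lebesgue_measure_itv0 m0) -integral_cst; last first.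
    exact: measurable_itv0.
  apply: ge0_le_integral_nomeas => [s _|s /andP[_ sm]]; first by rewrite lee_fin.
  by apply: rearr_ge_on Bc _; rewrite ?Bm ?lte_fin.
have p0 : (0 <= (phi m / m)%:E)%E by rewrite lee_fin divr_ge0 // ltW.
apply: le_trans _ (lee_wpmul2l p0 int_ge).
rewrite -EFinM lee_fin (_ : phi m / m * (c * m) = c * phi m) //.
by field; rewrite gt_eqF.
Qed.

End Rearrangement.

Section StepFunctions.
Variables (R : realType) (t : nat -> R).
Hypothesis t_gt0 : forall k, 0 < t k.
Hypothesis t_lt : forall k, t k.+1 < t k.
Hypothesis t_small : forall u, 0 < u -> exists k, t k <= u.
Local Notation mu := (@lebesgue_measure R).

Lemma t_le m n : (m <= n)%N -> t n <= t m.
Proof. by apply: Order.NatMonotonyTheory.nonincnP => k; exact: ltW. Qed.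

Definition piece k := [set u : R | t k.+1 <= u < t k].

Lemma pieceE k : piece k = `[t k.+1, t k[%classic.
Proof. by apply/seteqP; split => x /=; rewrite in_itv. Qed.

Lemma measurable_piece k : measurable (piece k).
Proof. by rewrite pieceE; exact: measurable_itv. Qed.

Lemma lebesgue_measure_piece k : mu (piece k) = (t k - t k.+1)%:E.
Proof. by rewrite pieceE lebesgue_measure_itv /= lte_fin t_lt -EFinB. Qed.

Lemma piece_index_le j k u v : piece j u -> piece k v -> u <= v -> (k <= j)%N.
Proof.
move=> /andP[ju _] /andP[_ vk] uv; rewrite leqNgt; apply/negP => /t_le jk.
by have := lt_le_trans vk (le_trans jk (le_trans ju uv)); rewrite ltxx.
Qed.

Lemma piece_uniq j k u : piece j u -> piece k u -> j = k.
Proof.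
move=> pj pk; apply/anti_leq.
by rewrite (piece_index_le pj pk) ?(piece_index_le pk pj).
Qed.

Lemma piece_cover u : 0 < u -> u < t 0 -> exists k, piece k u.
Proof.
move=> u0 ut; case: (ex_minnP (t_small u0)) => -[|k] tk kmin.
  by move: ut; rewrite ltNge tk.
by exists k; rewrite /piece /= tk ltNge; apply/negP => /kmin; rewrite ltnn.
Qed.

Definition piece_index u := xget 0%N [set k | piece k u].

Lemma piece_indexE k u : piece k u -> piece_index u = k.
Proof.
move=> pu; have ex : exists j, [set j | piece j u] j by exists k.
exact: piece_uniq (xgetPex 0%N ex) pu.
Qed.

Definition stepfun (a : nat -> R) u := if 0 < u < t 0 then a (piece_index u) else 0.

Lemma stepfunE a k u : piece k u -> stepfun a u = a k.
Proof.
move=> pu; rewrite /stepfun (piece_indexE pu); case/andP: pu => ku uk.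
by rewrite (lt_le_trans (t_gt0 _) ku) (lt_le_trans uk (t_le (leq0n k))).
Qed.

Lemma stepfun_out a u : ~~ (0 < u < t 0) -> stepfun a u = 0.
Proof. by rewrite /stepfun => /negbTE ->. Qed.

Lemma stepfun_ge0 a u : (forall k, 0 <= a k) -> 0 <= stepfun a u.
Proof. by move=> a0; rewrite /stepfun; case: ifP. Qed.

Lemma measurable_stepfun a : measurable_fun setT (stepfun a).
Proof.
move=> _ Y mY; rewrite setTI.
have -> : stepfun a @^-1` Y = \bigcup_k (piece k `&` [set _ | Y (a k)]) `|`
    (~` [set u | 0 < u < t 0] `&` [set _ | Y 0]).
  apply/seteqP; split => u /=.
    have [/andP[u0 ut] Yu|out Yu] := boolP (0 < u < t 0).
      have [k pk] := piece_cover u0 ut.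
      by left; exists k => //; rewrite -(stepfunE a pk).
    by right; split; [exact/negP|rewrite -(stepfun_out a out)].
  case=> [[k _ [pk Yk]]|[/negP out Y0]]; first by rewrite (stepfunE a pk).
  by rewrite stepfun_out.
apply: measurableU.
  apply: bigcupT_measurable => k; apply: measurableI; first exact: measurable_piece.
  exact: measurable_const_set.
apply: measurableI; last exact: measurable_const_set.
by apply: measurableC; exact: measurable_itv0.
Qed.

Lemma stepfun_nonincreasing a : (forall j k, (j <= k)%N -> a j <= a k) ->
  (forall k, 0 <= a k) -> forall u v, 0 < u -> u <= v -> stepfun a v <= stepfun a u.
Proof.
move=> a_nd a0 u v u0 uv.
have [/andP[v0 vt]|out] := boolP (0 < v < t 0).
  have [j pu] := piece_cover u0 (le_lt_trans uv vt); have [k pv] := piece_cover v0 vt.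
  by rewrite (stepfunE a pu) (stepfunE a pv) a_nd // (piece_index_le pu pv).
by rewrite stepfun_out // stepfun_ge0.
Qed.

Lemma lebesgue_measure_piece_itv0 k s : 0 < s ->
  mu (piece k `&` [set u | 0 < u < s]) = (Num.min s (t k) - Num.min s (t k.+1))%:E.
Proof.
move=> s0; have [sk1|sk1] := leP s (t k.+1).
  have sk : s <= t k := le_trans sk1 (ltW (t_lt k)).
  rewrite (min_idPl sk) subrr.
  rewrite [X in mu X](_ : _ = set0) ?measure0 //; apply/seteqP; split => u //.
  by case=> /andP[ku _] /andP[_ us]; have := lt_le_trans us sk1; rewrite ltNge ku.
rewrite (_ : _ `&` _ = `[t k.+1, Num.min s (t k)[%classic).
  by rewrite lebesgue_measure_itv /= lte_fin lt_min sk1 t_lt -EFinB.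
apply/seteqP; split => u /=; rewrite in_itv /= lt_min.
  by case=> /andP[-> ->] /andP[_ ->].
case/andP=> ku /andP[us uk].
by rewrite /piece /= ku uk us (lt_le_trans (t_gt0 _) ku).
Qed.

Lemma integral_stepfun_itv0_min a s :
  (\int[mu]_(u in [set u : R | (0 < u < s)%R]) (stepfun a u)%:E =
   \int[mu]_(u in [set u : R | (0 < u < Num.min s (t 0))%R]) (stepfun a u)%:E)%E.
Proof.
rewrite integral_mkcond [RHS]integral_mkcond; congr integral; apply/funext => u.
rewrite /patch; case: ifPn => [/set_mem /andP[u0 us]|nus].
  case: ifPn => [//|nus']; rewrite stepfun_out //.
  by apply: contraNN nus' => /andP[_ ut]; apply/mem_set; rewrite /= u0 lt_min us ut.
case: ifPn => // /set_mem /andP[u0]; rewrite lt_min => /andP[us _].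
by case/negP: nus; apply/mem_set; rewrite /= u0 us.
Qed.

Lemma integral_stepfun_le (a : nat -> R) (F : R -> R) (s : R) : 0 < s -> s <= t 0 ->
  (forall k, 0 <= a k) -> (forall u, 0 < u <= t 0 -> 0 <= F u) ->
  (forall k m, t k.+1 <= m <= t k -> a k * (m - t k.+1) <= F m - F (t k.+1)) ->
  (\int[mu]_(u in [set u : R | (0 < u < s)%R]) (stepfun a u)%:E <= (F s)%:E)%E.
Proof.
move=> s0 st0 a0 F0 aF.
pose m k := Num.min s (t k).
have m_pos k : 0 < m k <= t 0 by rewrite lt_min s0 t_gt0 ge_min st0.
have mpiece k : measurable (piece k `&` [set u | 0 < u < s]).
  by apply: measurableI; [exact: measurable_piece|exact: measurable_itv0].
have term k : ((a k)%:E * mu (piece k `&` [set u | (0 < u < s)%R]) <=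
    (F (m k) - F (m k.+1))%:E)%E.
  rewrite lebesgue_measure_piece_itv0 // -EFinM lee_fin /m.
  have [sk1|sk1] := leP s (t k.+1).
    by rewrite (min_idPl (le_trans sk1 (ltW (t_lt k)))) !subrr mulr0.
  apply: aF.
  by rewrite le_min (ltW sk1) ltW //= ge_min lexx orbT.
have -> : [set u | 0 < u < s] = \bigcup_k (piece k `&` [set u | 0 < u < s]).
  apply/seteqP; split => [u /andP[u0 us]|u [k _ []] //].
  have [k pk] := piece_cover u0 (lt_le_trans us st0).
  by exists k => //; split => //=; rewrite u0 us.
rewrite ge0_integral_bigcup //; last 3 first.
- by apply/measurable_EFinP; apply: measurable_funS (measurable_stepfun a).
- by move=> u _; rewrite lee_fin stepfun_ge0.
- by move=> i j _ _ [u [[pi _] [pj _]]]; exact: piece_uniq pi pj.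
apply: lime_le.
  apply: is_cvg_nneseries => n _ _; apply: integral_ge0 => u _.
  by rewrite lee_fin stepfun_ge0.
apply: nearW => n.
apply: (@le_trans _ _ (\sum_(0 <= k < n) (F (m k) - F (m k.+1))%:E)%R).
  apply: lee_sum => k _; rewrite (eq_integral (cst (a k)%:E)); last first.
    by move=> u; rewrite inE => -[/(stepfunE a) ->].
  by rewrite integral_cst; [exact: term | exact: mpiece].
rewrite sumEFin lee_fin (telescope_sumr_eq (fun k => - F (m k))) //; last first.
  by move=> k _; rewrite opprK addrC.
have -> : m 0%N = s by apply/min_idPl.
by have := F0 _ (m_pos n); lra.
Qed.

End StepFunctions.

Section Embedding.
Variables (R : realType) (Om : set R) (phi : R -> R).
Hypothesis Om_def : Om = [set t : R | 0 < t < 1] \/ Om = [set t : R | 0 < t].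
Hypothesis phi_qc : quasi_concave Om phi.
Hypothesis psi_cvg0 : (fun t => t / phi t) @ 0^'+ --> 0.
Local Notation mu := (@lebesgue_measure R).

Lemma Om_gt0 (u : R) : Om u -> 0 < u.
Proof. by case: Om_def => -> /=; [case/andP|]. Qed.

Lemma Om_le (u v : R) : Om v -> 0 < u -> u <= v -> Om u.
Proof.
case: Om_def => -> /=; last by [].
by case/andP=> _ v1 u0 uv; rewrite u0 (le_lt_trans uv v1).
Qed.

Lemma Om_lt1 (u : R) : 0 < u < 1 -> Om u.
Proof. by move=> u01; case: Om_def => -> //=; case/andP: u01. Qed.

Lemma measurable_Om : measurable Om.
Proof.
case: Om_def => ->; first exact: measurable_itv0.
rewrite (_ : [set t | 0 < t] = `]0, +oo[%classic); first exact: measurable_itv.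
by apply/seteqP; split => x /=; rewrite in_itv /= andbT.
Qed.

Lemma open_Om : open Om.
Proof. by case: Om_def => ->; [rewrite itv0E; exact: itv_open | exact: open_gt]. Qed.

Lemma phi_gt0 (u : R) : Om u -> 0 < phi u.
Proof. by case: phi_qc => _ + _ _; apply. Qed.

Lemma phi_le (u v : R) : Om u -> Om v -> u <= v -> phi u <= phi v.
Proof. by case: phi_qc => _ _ + _; apply. Qed.

Lemma phi_div_le (u v : R) : Om u -> Om v -> u <= v -> phi v / v <= phi u / u.
Proof. by case: phi_qc => _ _ _; apply. Qed.

Definition psi (u : R) := u / phi u.

Lemma psi_gt0 (u : R) : Om u -> 0 < psi u.
Proof. by move=> Ou; rewrite divr_gt0 ?phi_gt0 ?Om_gt0. Qed.

Lemma psi_le (u v : R) : Om u -> Om v -> u <= v -> psi u <= psi v.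
Proof.
move=> Ou Ov uv; have := phi_div_le Ou Ov uv.
have u0 := Om_gt0 Ou; have v0 := Om_gt0 Ov.
have pu := phi_gt0 Ou; have pv := phi_gt0 Ov.
by rewrite /psi -[u / _]invf_div -[v / _]invf_div lef_pV2 ?posrE ?divr_gt0.
Qed.

Lemma psi_lipschitz (a u v : R) : Om a -> Om u -> Om v -> a <= u -> a <= v ->
  `|psi u - psi v| <= `|u - v| / phi a.
Proof.
move=> Oa + + au av; have pa := phi_gt0 Oa.
have key (x y : R) : Om x -> Om y -> a <= x -> x <= y ->
    `|psi x - psi y| <= `|x - y| / phi a.
  move=> Ox Oy ax xy; have px := phi_gt0 Ox; have py := phi_gt0 Oy.
  rewrite distrC [`|x - y|]distrC !ger0_norm ?subr_ge0 ?psi_le //.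
  apply: (@le_trans _ _ ((y - x) / phi x)).
    rewrite /psi mulrBl lerD2r ler_wpM2l ?(ltW (Om_gt0 Oy)) // lef_pV2 ?posrE //.
    exact: phi_le.
  by rewrite ler_wpM2l ?subr_ge0 // lef_pV2 ?posrE // phi_le.
move=> Ou Ov; have [uv|/ltW vu] := leP u v; first exact: key.
by rewrite distrC [`|u - v|]distrC; exact: key.
Qed.

Lemma psi_continuous : {in Om, continuous psi}.
Proof.
move=> x /set_mem Ox; have x0 := Om_gt0 Ox.
have Ox2 : Om (x / 2) by apply: (Om_le Ox); lra.
have K0 := phi_gt0 Ox2.
apply/cvgrPdist_le => e e0; near=> y.
have Oy : Om y by near: y; exact: open_Om.
have /andP[yx2 ye] : (`|x - y| < x / 2) && (`|x - y| < e * phi (x / 2)).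
  rewrite -lt_min; near: y; apply/nbhs_ballP.
  exists (Num.min (x / 2) (e * phi (x / 2))).
    by rewrite /= lt_min divr_gt0 ?mulr_gt0.
  by move=> z; rewrite /ball /=.
apply: le_trans (psi_lipschitz Ox2 Ox Oy _ _) _; first lra.
  by move: yx2; rewrite ltr_norml => /andP[_]; lra.
by rewrite ler_pdivrMr // ltW.
Unshelve. all: by end_near.
Qed.

Lemma psi_small (e t : R) : 0 < e -> 0 < t -> exists2 s, 0 < s <= t & psi s <= e.
Proof.
move=> e0 t0; near (0 : R)^'+ => s; exists s.
  by apply/andP; split; near: s; [exact: nbhs_right_gt | exact: nbhs_right_le].
near: s; move/cvgrPdist_le : psi_cvg0 => /(_ e e0); apply: filterS => s.
by rewrite sub0r normrN; apply: le_trans (ler_norm _).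
Unshelve. all: by end_near.
Qed.

Definition chord_slope k (t : R) := (1 - k.+2%:R^-1) / phi t.

Definition next_point_spec k (t s : R) := [/\ 0 < s, s <= t / k.+2%:R &
  forall u, s <= u <= t ->
    psi s - chord_slope k t * s <= psi u - chord_slope k t * u].

(* The next point minimises [psi u - chord_slope k t * u] on [sg, t], where
   [psi sg] is so small that the minimum cannot be attained beyond [t / k.+2]. *)
Lemma next_point_ex k (t : R) : 0 < t < 1 -> exists s, next_point_spec k t s.
Proof.
move=> t01; have Ot := Om_lt1 t01; have t0 := Om_gt0 Ot; have pt := phi_gt0 Ot.
set d : R := k.+2%:R^-1; set c := chord_slope k t.
have d0 : 0 < d by rewrite invr_gt0.
have d1 : d <= 2^-1 by rewrite lef_pV2 ?posrE // ler_nat.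
have c0 : 0 <= c by rewrite /c /chord_slope -/d; apply: divr_ge0; [lra | exact: ltW].
have e0 : 0 < d * d * psi t := mulr_gt0 (mulr_gt0 d0 d0) (psi_gt0 Ot).
have [sg /andP[sg0 sgt] psg] := psi_small e0 t0.
pose h u := psi u - c * u.
have h_cont : {within `[sg, t], continuous h}.
  apply: continuous_in_subspaceT => x; rewrite inE /= in_itv /= => /andP[sgx xt].
  apply: cvgB; first by apply: psi_continuous; apply/mem_set; apply: (Om_le Ot); lra.
  by apply: cvgM; [exact: cvg_cst | exact: cvg_id].
have [s] := EVT_min sgt h_cont; rewrite in_itv /= => /andP[sgs st] smin.
exists s; split.
- exact: lt_le_trans sgs.
- rewrite leNgt; apply/negP => ts.
  have Os : Om s := Om_le Ot (lt_le_trans sg0 sgs) st.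
  have q0 : 0 < (phi t)^-1 by rewrite invr_gt0.
  have psi_s : s * (phi t)^-1 <= psi s.
    by rewrite ler_wpM2l ?(ltW (Om_gt0 Os)) // lef_pV2 ?posrE ?phi_gt0 // phi_le.
  have hs : h s <= h sg by apply: smin; rewrite in_itv /= lexx sgt.
  have hsg : h sg <= psi sg by rewrite /h lerBlDr lerDl mulr_ge0 // ltW.
  have dts : d * (phi t)^-1 * (t * d) < d * (phi t)^-1 * s.
    by rewrite ltr_pM2l // mulr_gt0.
  move: hs hsg psg; rewrite /h /c /chord_slope -/d [psi t]/psi; nra.
- move=> u /andP[su ut]; apply: smin; rewrite in_itv /= ut andbT.
  exact: le_trans su.
Qed.

Definition next_point k (t : R) := xget 0 [set s | next_point_spec k t s].

Fixpoint tk k := if k is k'.+1 then next_point k' (tk k') else 2^-1.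

Lemma tk_spec k :
  [/\ 0 < tk k, tk k <= k.+2%:R^-1 & next_point_spec k (tk k) (tk k.+1)].
Proof.
have next j : 0 < tk j -> tk j <= j.+2%:R^-1 -> next_point_spec j (tk j) (tk j.+1).
  move=> t0 tle; apply: (xgetPex 0 (next_point_ex j _)).
  by rewrite t0 (le_lt_trans tle) // invf_lt1 // ltr1n.
elim: k => [|k [t0 tle [s0 snext _]]].
  have t0 : 0 < tk 0 by rewrite /= invr_gt0 ltr0n.
  by split => //; exact: next.
have s1 : tk k.+1 <= k.+3%:R^-1.
  apply: le_trans snext _; apply: le_trans (ler_wpM2r _ tle) _.
    by rewrite invr_ge0.
  by rewrite -invfM lef_pV2 ?posrE ?mulr_gt0 // -natrM ler_nat; nia.
by split => //; exact: next.
Qed.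

Lemma tk_gt0 k : 0 < tk k. Proof. by case: (tk_spec k). Qed.

Lemma tk_next k : next_point_spec k (tk k) (tk k.+1).
Proof. by case: (tk_spec k). Qed.

Lemma tk_lt k : tk k.+1 < tk k.
Proof.
case: (tk_next k) => _ + _; move/le_lt_trans; apply.
by rewrite ltr_pdivrMr // ltr_pMr ?tk_gt0 // ltr1n.
Qed.

Lemma Om_tk k : Om (tk k).
Proof.
case: (tk_spec k) => t0 tle _; apply: Om_lt1.
by rewrite t0 (le_lt_trans tle) // invf_lt1 // ltr1n.
Qed.

Lemma tk_small (u : R) : 0 < u -> exists k, tk k <= u.
Proof.
move=> u0; exists (Num.truncn u^-1); case: (tk_spec (Num.truncn u^-1)) => _ + _.
move/le_trans; apply; rewrite invf_ple ?posrE //.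
by apply/ltW/(lt_le_trans (truncnS_gt _)); rewrite ler_nat.
Qed.

Definition slope k := chord_slope k (tk k).

Lemma slope_gt0 k : 0 < slope k.
Proof.
apply: divr_gt0; last exact: phi_gt0 (Om_tk k).
by rewrite subr_gt0 invf_lt1 // ltr1n.
Qed.

Lemma slope_le j k : (j <= k)%N -> slope j <= slope k.
Proof.
move=> jk; have p i := phi_gt0 (Om_tk i).
apply: ler_pM.
- by rewrite subr_ge0 invf_le1 // ler1n.
- by rewrite invr_ge0 ltW.
- by rewrite lerD2l lerN2 lef_pV2 ?posrE // ler_nat ltnS.
- rewrite lef_pV2 ?posrE ?(p j) ?(p k) //.
  by apply: phi_le; [exact: Om_tk | exact: Om_tk | exact: (t_le tk_lt)].
Qed.

Lemma slope_chord k (m : R) : tk k.+1 <= m <= tk k ->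
  slope k * (m - tk k.+1) <= psi m - psi (tk k.+1).
Proof. by case: (tk_next k) => _ _ /[apply]; rewrite /slope mulrBr; lra. Qed.

(* The piece [t_(k+1), t_k) is almost all of (0, t_k), so by quasi-concavity
   [phi] of its length is almost [phi t_k]. *)
Lemma slope_phi_piece k : (1 - k.+2%:R^-1) ^+ 2 <= slope k * phi (tk k - tk k.+1).
Proof.
set d : R := k.+2%:R^-1; set t := tk k; set m := tk k - tk k.+1.
have d0 : 0 < d by rewrite invr_gt0.
have d1 : d <= 2^-1 by rewrite lef_pV2 ?posrE // ler_nat.
have t0 : 0 < t := tk_gt0 k.
have m0 : 0 < m by rewrite subr_gt0 tk_lt.
have mt : m <= t by rewrite /m lerBlDr lerDl ltW // tk_gt0.
have Ot : Om t := Om_tk k.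
have Om_m : Om m := Om_le Ot m0 mt.
have pt := phi_gt0 Ot.
have md : (1 - d) * t <= m.
  case: (tk_next k) => _ + _; rewrite /m -/t -/d mulrBl mul1r [d * t]mulrC; lra.
have phi_md : (1 - d) * phi t <= phi m.
  have X0 : 0 <= phi t / t by rewrite divr_ge0 // ltW.
  rewrite -[phi m](divfK (lt0r_neq0 m0)) -[phi t](divfK (lt0r_neq0 t0)).
  apply: (@le_trans _ _ (phi t / t * m)); first by rewrite mulrCA ler_wpM2l.
  by rewrite ler_wpM2r ?(ltW m0) //; exact: phi_div_le Om_m Ot mt.
rewrite /slope /chord_slope -/d -/t expr2 -mulrA; apply: ler_wpM2l; first lra.
by rewrite mulrC ler_pdivlMr.
Qed.

Definition embedding (x : nat -> R) :=
  stepfun tk (fun k => x (logn 2 k.+1) * slope k).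

Lemma measurable_embedding x : measurable_fun Om (embedding x).
Proof. exact: measurable_funS (measurable_stepfun tk_gt0 tk_lt tk_small _). Qed.

Lemma embeddingD x y u : embedding (x \+ y) u = embedding x u + embedding y u.
Proof.
by rewrite /embedding /stepfun; case: ifP => _ /=; rewrite ?addr0 // mulrDl.
Qed.

Lemma embeddingZ a x u : embedding (fun n => a * x n) u = a * embedding x u.
Proof. by rewrite /embedding /stepfun; case: ifP => _; rewrite ?mulr0 // mulrA. Qed.

Lemma embedding_max x y u :
  embedding (fun n => Num.max (x n) (y n)) u =
  Num.max (embedding x u) (embedding y u).
Proof.
rewrite /embedding /stepfun; case: ifP => _; rewrite ?maxxx //.
by rewrite maxr_pMl // ltW // slope_gt0.
Qed.


Lemma integral_majorant_le (b s : R) : 0 <= b -> Om s ->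
  (\int[mu]_(u in [set u : R | (0 < u < s)%R])
     (stepfun tk (fun k => b * slope k) u)%:E <= (b * psi s)%:E)%E.
Proof.
move=> b0 Os; have s0 := Om_gt0 Os.
set s' := Num.min s (tk 0).
have s'0 : 0 < s' by rewrite lt_min s0 tk_gt0.
have s't : s' <= tk 0 by rewrite ge_min lexx orbT.
have Os' : Om s' by apply: (Om_le Os); rewrite // ge_min lexx.
have a0 k : 0 <= b * slope k by rewrite mulr_ge0 // ltW // slope_gt0.
have F0 u : 0 < u <= tk 0 -> 0 <= b * psi u.
  case/andP=> u0 ut; rewrite mulr_ge0 // ltW // psi_gt0 //.
  exact: Om_le (Om_tk 0) u0 ut.
have aF k m : tk k.+1 <= m <= tk k ->
    b * slope k * (m - tk k.+1) <= b * psi m - b * psi (tk k.+1).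
  by move=> /slope_chord chord; rewrite -mulrA -mulrBr; apply: ler_wpM2l.
rewrite (integral_stepfun_itv0_min tk).
apply: le_trans (integral_stepfun_le tk_gt0 tk_lt tk_small s'0 s't a0 F0 aF) _.
rewrite lee_fin; apply: (ler_wpM2l b0).
by apply: psi_le Os' Os _; rewrite ge_min lexx.
Qed.

Lemma Mnorm_embedding_le x (b : R) :
  (forall n, `|x n| <= b) -> (Mnorm Om phi (embedding x) <= b%:E)%E.
Proof.
move=> xb; have b0 : 0 <= b := le_trans (normr_ge0 _) (xb 0%N).
apply: (Mnorm_le_nonincreasing measurable_Om Om_gt0
  (g := stepfun tk (fun k => b * slope k))).
- exact: measurable_embedding.
- by move=> u /phi_gt0/ltW.
- apply: (stepfun_nonincreasing tk_gt0 tk_lt tk_small) => [j k jk|k].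
    by rewrite ler_wpM2l // slope_le.
  by rewrite mulr_ge0 // ltW // slope_gt0.
- by move=> u _; apply: stepfun_ge0 => k; rewrite mulr_ge0 // ltW // slope_gt0.
- move=> u _; rewrite /embedding /stepfun; case: ifP => _; last by rewrite normr0.
  by rewrite normrM (gtr0_norm (slope_gt0 _)) ler_wpM2r // ltW // slope_gt0.
move=> s Os; have s0 := Om_gt0 Os; have ps := phi_gt0 Os.
have p0 : (0 <= (phi s / s)%:E)%E by rewrite lee_fin divr_ge0 // ltW.
apply: le_trans (lee_wpmul2l p0 (integral_majorant_le b0 Os)) _.
rewrite -EFinM lee_fin (_ : phi s / s * (b * psi s) = b) //.
by rewrite /psi; field; rewrite (gt_eqF s0) (gt_eqF ps).
Qed.

Lemma Mnorm_embedding_ge x n : ((`|x n|)%:E <= Mnorm Om phi (embedding x))%E.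
Proof.
apply: lee_frequently_sqr => // N; have [k Nk kn] := logn2_frequently n N.
exists k => //; set m := tk k - tk k.+1.
have m0 : 0 < m by rewrite subr_gt0 tk_lt.
have Om_m : Om m by apply: (Om_le (Om_tk k)); rewrite // lerBlDr lerDl ltW // tk_gt0.
have piece_Om : piece tk k `<=` Om.
  move=> u /andP[ku uk]; apply: (Om_le (Om_tk k)); last exact: ltW.
  exact: lt_le_trans (tk_gt0 _) ku.
have c0 : 0 <= `|x n| * slope k by rewrite mulr_ge0 // ltW // slope_gt0.
have embedding_piece u : piece tk k u -> `|x n| * slope k <= `|embedding x u|.
  move=> pu; rewrite /embedding (stepfunE tk_gt0 tk_lt _ pu) kn normrM.
  by rewrite (gtr0_norm (slope_gt0 k)).
have := Mnorm_ge_on measurable_Om Om_gt0 (measurable_embedding x)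
  (measurable_piece tk k) piece_Om (lebesgue_measure_piece tk_lt k) Om_m c0
  (ltW (phi_gt0 Om_m)) embedding_piece.
by apply: le_trans; rewrite lee_fin -mulrA ler_wpM2l // slope_phi_piece.
Qed.

Lemma Mnorm_embedding x : bounded_seq x -> Mnorm Om phi (embedding x) = linf_norm x.
Proof.
move=> /linf_norm_fin_num/fineK xE; apply/le_anti/andP; split.
- rewrite -xE; apply: Mnorm_embedding_le => n; rewrite -lee_fin xE.
  by apply: ereal_sup_ubound; exists n.
- by apply: ge_ereal_sup => _ [n _ <-]; exact: Mnorm_embedding_ge.
Qed.

End Embedding.

Unset Implicit Arguments.

Theorem corollary3p9 (R : realType) (Omega : set R) (phi : R -> R) :
  (Omega = [set t : R | 0 < t < 1] \/ Omega = [set t : R | 0 < t]) ->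
  quasi_concave Omega phi ->
  (fun t => t / phi t) @ 0^'+ --> 0 ->
  exists T : (nat -> R) -> (R -> R), lattice_isometric_embedding Omega phi T.
Proof.
move=> Om_def phi_qc psi_cvg0.
have norm_embedding := Mnorm_embedding Om_def phi_qc psi_cvg0.
exists (embedding phi); split => [x bx|x y _ _|a x _|x y _ _|x /norm_embedding //].
- split; first exact: measurable_embedding Om_def phi_qc psi_cvg0 x.
  by rewrite norm_embedding //; case/fin_numPlt/andP: (linf_norm_fin_num bx).
- by apply: aeW => u _; exact: embeddingD.
- by apply: aeW => u _; exact: embeddingZ.
- by apply: aeW => u _; exact: embedding_max Om_def phi_qc psi_cvg0 x y u.
Qed.
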